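(* Let $0<v_T<\tfrac12$ and $V_u>v_T$, and put $$k_{\rm peak}=\frac{V_u}{v_T}-1,\qquad g_{\rm peak}=\frac{F'(v_T)\,v_T}{V_u}.$$ Then: (a) for every $g>0$ and $k\ge 0$ such that the central cell fires when $v_u$ is raised from $0$ to $V_u$, one has $k<k_{\rm peak}$; (b) for $g=g_{\rm peak}$ and $k\ge0$, the central cell fires when $v_u$ is raised from $0$ to $V_u$ if and only if $k<k_{\rm peak}$. In particular, the supremum over all $g>0$ of $\sup\{k\ge 0:\ \text{the cell fires with parameters }(g,k)\}$ equals $k_{\rm peak}$ and is attained at $g=g_{\rm peak}$.
   Context: Fix $v_T\in(0,\tfrac12)$ and let $F(v)=v(v-v_T)(1-v)$, with local minimum at $v_{\min}$, local maximum at $v_{\max}$, inflection point $v_i=(1+v_T)/3$; $0<v_{\min}<v_T<v_i<v_{\max}<1$. Central-cell model: for $g>0$, real $k\ge0$ and upstream voltage $v_u$, $\frac{dv}{dt}=F(v)+g(v_u-v)-gkv$; equilibria solve $F(v)=g(k+1)v-gv_u$. Firing: given $V_u>0$, the central cell fires when $v_u$ is raised from $0$ to $V_u$ if there exist $v_{u,c}\in(0,V_u)$ and $v^*\in(v_{\min},v_i)$ with $F(v^* )=g(k+1)v^*-gv_{u,c}$ and $F'(v^* )=g(k+1)$ (a saddle-node collision of the rest and threshold equilibria). *)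

From Stdlib Require Import Reals Lra.
Open Scope R_scope.

Definition F (vT v : R) : R := v * (v - vT) * (1 - v).

Definition Fp (vT v : R) : R := -3 * v ^ 2 + 2 * (1 + vT) * v - vT.



Definition v_i (vT : R) : R := (1 + vT) / 3.

(* Local minimum of F: the smaller root of F'. *)
Definition v_min (vT : R) : R :=
  ((1 + vT) - sqrt ((1 + vT) ^ 2 - 3 * vT)) / 3.

(* Firing criterion: saddle-node collision of rest and threshold equilibria
   at some v_{u,c} in (0, Vu), v* in (v_min, v_i). *)
Definition fires (vT g k Vu : R) : Prop :=
  exists vuc vstar : R,
    0 < vuc < Vu /\ v_min vT < vstar < v_i vT /\
    F vT vstar = g * (k + 1) * vstar - g * vuc /\
    Fp vT vstar = g * (k + 1).

Definition k_peak (vT Vu : R) : R := Vu / vT - 1.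
Definition g_peak (vT Vu : R) : R := Fp vT vT * vT / Vu.

(* At a saddle node [w] the equilibrium equations give
   [g v_uc = w F'(w) - F(w) = w^2 (1 + vT - 2 w)], the intercept of the tangent
   to [F] at [w].  Since [w^2 (1 + vT - 2 w) - vT F'(w) = (w - vT)^2 (1 - 2 w)],
   this intercept dominates [vT F'(w) = vT g (k + 1)], whence [vT (k + 1) < V_u].
   Conversely, for [g = g_peak] and [vT (k + 1) < V_u] the slope [g (k + 1)] lies in
   [(0, F'(vT))], so it is attained by [F'] at some [w] in [(v_min, vT)]; as the
   intercept increases on [(0, v_i)], it stays below its value [g_peak V_u] at [vT]. *)
From Stdlib Require Import Reals Lra Psatz.
Open Scope R_scope.

Lemma Fp_at_threshold (vT : R) : Fp vT vT = vT * (1 - vT).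
Proof. unfold Fp; ring. Qed.

Lemma tangent_intercept (vT v : R) :
  v * Fp vT v - F vT v = v ^ 2 * (1 + vT - 2 * v).
Proof. unfold F, Fp; ring. Qed.

Lemma threshold_slope_le_intercept (vT v : R) :
  v <= 1 / 2 -> vT * Fp vT v <= v ^ 2 * (1 + vT - 2 * v).
Proof.
  intros Hv.
  assert (Hsq : v ^ 2 * (1 + vT - 2 * v) - vT * Fp vT v = (v - vT) ^ 2 * (1 - 2 * v))
    by (unfold Fp; ring).
  assert (0 <= (v - vT) ^ 2 * (1 - 2 * v))
    by (apply Rmult_le_pos; [apply pow2_ge_0 | lra]).
  lra.
Qed.

Lemma intercept_lt_at_threshold (vT v : R) :
  0 < v < vT -> vT < 1 / 2 -> v ^ 2 * (1 + vT - 2 * v) < vT ^ 2 * (1 - vT).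
Proof.
  intros Hv HT.
  assert (Hfact : vT ^ 2 * (1 - vT) - v ^ 2 * (1 + vT - 2 * v)
                  = (vT - v) * (vT * (1 - vT) + v * (1 - vT - 2 * v))) by ring.
  assert (0 < (vT - v) * (vT * (1 - vT) + v * (1 - vT - 2 * v)))
    by (apply Rmult_lt_0_compat; nra).
  lra.
Qed.

Lemma v_min_pos (vT : R) : 0 < vT < 1 / 2 -> 0 < v_min vT.
Proof.
  intros HT; unfold v_min.
  assert (HD : 0 <= (1 + vT) ^ 2 - 3 * vT) by nra.
  pose proof (sqrt_sqrt _ HD); pose proof (sqrt_pos ((1 + vT) ^ 2 - 3 * vT)).
  assert (sqrt ((1 + vT) ^ 2 - 3 * vT) < 1 + vT) by nra.
  lra.
Qed.

Lemma Fp_lower_root (vT c : R) :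
  0 < vT < 1 / 2 -> 0 < c < Fp vT vT ->
  exists v, v_min vT < v < vT /\ Fp vT v = c.
Proof.
  intros HT Hc; rewrite Fp_at_threshold in Hc.
  set (D := (1 + vT) ^ 2 - 3 * (vT + c)).
  set (D0 := (1 + vT) ^ 2 - 3 * vT).
  assert (HD : 0 < D) by (unfold D; nra).
  assert (HD0 : 0 <= D0) by (unfold D0; nra).
  pose proof (sqrt_sqrt _ (Rlt_le _ _ HD)); pose proof (sqrt_lt_R0 _ HD).
  pose proof (sqrt_sqrt _ HD0); pose proof (sqrt_pos D0).
  assert (sqrt D < sqrt D0) by (unfold D, D0 in *; nra).
  assert (1 - 2 * vT < sqrt D) by (unfold D in *; nra).
  exists ((1 + vT - sqrt D) / 3); unfold v_min; fold D0.
  split; [lra |].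
  unfold Fp, D in *; nra.
Qed.

Lemma fires_slope_bound (vT g k Vu : R) :
  vT < 1 / 2 -> 0 < g -> fires vT g k Vu -> vT * (k + 1) < Vu.
Proof.
  intros HT Hg (vuc & vs & Hvuc & Hvs & Heq & Hslope).
  assert (Hintercept : g * vuc = vs ^ 2 * (1 + vT - 2 * vs)).
  { rewrite <- tangent_intercept, Hslope, Heq; ring. }
  assert (vT * Fp vT vs <= vs ^ 2 * (1 + vT - 2 * vs))
    by (apply threshold_slope_le_intercept; unfold v_i in Hvs; lra).
  rewrite Hslope in *.
  apply (Rmult_lt_reg_l g); [exact Hg | nra].
Qed.

Lemma fires_of_slope (vT g k Vu : R) :
  0 < vT < 1 / 2 -> 0 < g -> 0 < g * (k + 1) < Fp vT vT ->
  vT ^ 2 * (1 - vT) <= g * Vu -> fires vT g k Vu.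
Proof.
  intros HT Hg Hslope HVu.
  destruct (Fp_lower_root vT (g * (k + 1)) HT Hslope) as (v & Hv & HFp).
  pose proof (v_min_pos vT HT).
  pose proof (intercept_lt_at_threshold vT v ltac:(lra) ltac:(lra)).
  exists (v ^ 2 * (1 + vT - 2 * v) / g), v.
  split; [split | split; [unfold v_i; lra | split]].
  - apply Rdiv_lt_0_compat; [apply Rmult_lt_0_compat; nra | exact Hg].
  - apply (Rmult_lt_reg_l g); [exact Hg |].
    field_simplify; lra.
  - rewrite <- HFp, <- (tangent_intercept vT v); field; lra.
  - exact HFp.
Qed.

Lemma k_lt_k_peak (vT Vu k : R) : 0 < vT -> (k < k_peak vT Vu <-> vT * (k + 1) < Vu).
Proof.
  intros HT; unfold k_peak.
  replace (Vu / vT - 1) with ((Vu - vT) / vT) by (field; lra).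
  split; intros H.
  - apply (Rmult_lt_compat_l vT) in H; [| exact HT].
    replace (vT * ((Vu - vT) / vT)) with (Vu - vT) in H by (field; lra); lra.
  - apply (Rmult_lt_reg_l vT); [exact HT |].
    replace (vT * ((Vu - vT) / vT)) with (Vu - vT) by (field; lra); lra.
Qed.

Lemma g_peak_pos (vT Vu : R) : 0 < vT < 1 / 2 -> 0 < Vu -> 0 < g_peak vT Vu.
Proof.
  intros HT HVu; unfold g_peak; rewrite Fp_at_threshold.
  apply Rdiv_lt_0_compat; nra.
Qed.

Lemma is_lub_of_interval (S : R -> Prop) (b : R) :
  0 < b -> (forall k, S k -> k < b) -> (forall k, 0 <= k < b -> S k) -> is_lub S b.
Proof.
  intros Hb Hup Hin; split.
  - intros k Hk; left; exact (Hup k Hk).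
  - intros m Hm.
    destruct (Rle_lt_dec b m) as [Hle | Hlt]; [exact Hle |].
    set (k := (Rmax m 0 + b) / 2).
    assert (m <= Rmax m 0) by apply Rmax_l.
    assert (0 <= Rmax m 0) by apply Rmax_r.
    assert (Rmax m 0 < b) by (apply Rmax_lub_lt; lra).
    assert (k <= m) by (apply Hm, Hin; unfold k; lra).
    unfold k in *; lra.
Qed.

Theorem mainTheorem3 (vT Vu : R) :
  0 < vT < 1 / 2 -> vT < Vu ->
  (forall g k : R, 0 < g -> 0 <= k -> fires vT g k Vu -> k < k_peak vT Vu) /\
  (forall k : R, 0 <= k -> (fires vT (g_peak vT Vu) k Vu <-> k < k_peak vT Vu)) /\
  is_lub (fun k => exists g, 0 < g /\ 0 <= k /\ fires vT g k Vu) (k_peak vT Vu) /\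
  0 < g_peak vT Vu /\
  is_lub (fun k => 0 <= k /\ fires vT (g_peak vT Vu) k Vu) (k_peak vT Vu).
Proof.
  intros HT HV.
  pose proof (g_peak_pos vT Vu HT ltac:(lra)) as Hgp.
  assert (HA : forall g k, 0 < g -> fires vT g k Vu -> k < k_peak vT Vu).
  { intros g k Hg Hf; apply k_lt_k_peak; [lra | exact (fires_slope_bound _ _ _ _ (proj2 HT) Hg Hf)]. }
  assert (HB : forall k, 0 <= k -> k < k_peak vT Vu -> fires vT (g_peak vT Vu) k Vu).
  { intros k Hk Hkp; apply k_lt_k_peak in Hkp; [| lra].
    assert (HgVu : g_peak vT Vu * Vu = vT * (1 - vT) * vT)
      by (unfold g_peak; rewrite Fp_at_threshold; field; lra).
    apply fires_of_slope; [exact HT | exact Hgp | rewrite Fp_at_threshold; split | nra].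
    - apply Rmult_lt_0_compat; lra.
    - apply (Rmult_lt_reg_r Vu); [lra |].
      assert (0 < vT * (1 - vT)) by nra.
      nra. }
  assert (Hkp : 0 < k_peak vT Vu) by (apply k_lt_k_peak; lra).
  split; [intros g k Hg _; apply HA, Hg |].
  split; [intros k Hk; split; [apply HA, Hgp | apply HB, Hk] |].
  split; [| split; [exact Hgp |]]; apply is_lub_of_interval; try exact Hkp.
  - intros k (g & Hg & _ & Hf); exact (HA g k Hg Hf).
  - intros k Hk; exists (g_peak vT Vu); split; [exact Hgp | split; [lra | apply HB; lra]].
  - intros k (_ & Hf); exact (HA _ k Hgp Hf).
  - intros k Hk; split; [lra | apply HB; lra].
Qed.
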